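(* Fix $\beta\ge1$ and let $\{X_i\}_{i\ge1}$, $W_n$, $\xi$, $\mathcal H$ and $\alpha$ be as in the context, with $\sup_{i\ge1}\mathbb E[|X_i|^{2+\alpha}]<\infty$. Fix $f\in\mathcal H$ and let $\xi_k:=f(W_k)-\mathbb E[f(W_k)]$ and $Z_l:=\sum_{4^{l-1}\le i<4^l}\frac{\xi_i}{i}$. Then there exists a positive constant $M_5$ such that for all $1\le n_1\le n_2$, $$\sum_{l=n_1}^{n_2}\mathbb E[Z_l^2]\le M_5\,(n_2-n_1+1).$$
   Context: Sub-linear expectation space $(\Omega,\mathscr H,\mathbb E)$: $(\Omega,\mathcal F)$ a measurable space, $\mathscr H$ a linear space of real measurable functions closed under $(X_1,\dots,X_n)\mapsto\varphi(X_1,\dots,X_n)$ for $\varphi\in C_{b,Lip}(\mathbb R^n)$ (bounded Lipschitz functions), and $\mathbb E:\mathscr H\to\mathbb R$ monotone, constant preserving, sub-additive and positively homogeneous; it is assumed $\mathbb E[X]=\sup_{P\in\mathcal P}E_P[X]$ for a family $\mathcal P$ of $\sigma$-additive probability measures. $(\widetilde\Omega,\widetilde{\mathscr H},\widetilde{\mathbb E})$ is another sub-linear expectation space. Both satisfy condition (A): for every $X$ and every sequence $f_n\in C_{b,Lip}(\mathbb R)$ with $f_n\downarrow0$, $\mathbb E[f_n(X)]\downarrow0$ (resp. $\widetilde{\mathbb E}[f_n(X)]\downarrow0$). Independence: $Y\in\mathscr H^n$ is independent of $X\in\mathscr H^m$ if $\mathbb E[\varphi(X,Y)]=\mathbb E\big[\mathbb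 E[\varphi(x,Y)]|_{x=X}\big]$ for all $\varphi\in C_{b,Lip}(\mathbb R^{m+n})$; $\{X_n\}$ is independent if $X_{n+1}$ is independent of $(X_1,\dots,X_n)$ for every $n$. Standing setting: $\{X_i\}$ is independent in $(\Omega,\mathscr H,\mathbb E)$ with $\mathbb E[X_i]=\mathbb E[-X_i]=0$, $\overline\sigma_i=\sqrt{\mathbb E[X_i^2]}$, $\underline\sigma_i=\sqrt{-\mathbb E[-X_i^2]}$, $\overline\sigma_i/\underline\sigma_i=\beta$ for all $i$, $0<\inf_i\underline\sigma_i^2\le\sup_i\overline\sigma_i^2<\infty$; $S_n=\sum_{i\le n}X_i$, $\sigma_i=(\underline\sigma_i+\overline\sigma_i)/2$, $B_n=\sqrt{\sum_{i\le n}\sigma_i^2}$, $W_n=S_n/B_n$. $\xi$ is $G$-normal under $\widetilde{\mathbb E}$ (for each $f\in C_{b,Lip}(\mathbb R)$, $u(t,x)=\widetilde{\mathbb E}[f(x+\sqrt t\xi)]$ is the unique viscosity solution of $\partial_tu-G(\partial_{xx}u)=0$, $u(0,\cdot)=f$, with $G(a)=\frac12\widetilde{\mathbb E}[a\xi^2]$), with $\sqrt{\widetilde{\mathbb E}[\xi^2]}=\frac{2\beta}{1+\beta}$, $\sqrt{-\widetilde{\mathbb E}[-\xi^2]}=\frac{2}{1+\beta}$. $\mathcal H:=\{f\in C_{b,Lip}(\mathbb R):\widetilde{\mathbb E}[f(\xi)]=-\widetilde{\mathbb E}[-f(\xi)]\}$. $\alpha\in(0,1)$ is the constant from Song's theorem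 (cited): there exist $\alpha\in(0,1)$ depending on $\beta$ and $C_{\alpha,\beta}>0$ such that for every such sequence and every $n$, $\sup_{|f|_{Lip}\le1}|\mathbb E[f(W_n)]-\widetilde{\mathbb E}[f(\xi)]|\le C_{\alpha,\beta}\sup_{1\le i\le n}\{\frac{\mathbb E[|X_i|^{2+\alpha}]}{\sigma_i^{2+\alpha}}(\frac{\sigma_i}{B_n})^\alpha\}$. *)

From HB Require Import structures.
From mathcomp Require Import all_boot all_order all_algebra.
From mathcomp Require Import all_classical all_reals all_analysis.
Set Implicit Arguments. Unset Strict Implicit. Unset Printing Implicit Defensive.
Import Order.TTheory GRing.Theory Num.Theory.
Import numFieldNormedType.Exports.
Local Open Scope classical_set_scope.
Local Open Scope ring_scope.

Section SubLinear.
Context {R : realType}.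

Definition bounded_fun {T : Type} (g : T -> R) : Prop :=
  exists M : R, forall x, `|g x| <= M.

(* C_{b,Lip}(R^I) for a finite index type I (R^n = 'I_n -> R), l^1 distance *)
Definition Cb_Lip {I : finType} (phi : (I -> R) -> R) : Prop :=
  bounded_fun phi /\
  exists L : R, forall x y, `|phi x - phi y| <= L * \sum_(i : I) `|x i - y i|.

Definition Cb_Lip1 (g : R -> R) : Prop :=
  bounded_fun g /\ exists L : R, forall x y, `|g x - g y| <= L * `|x - y|.

Definition tup {I : Type} {Om : Type} (X : I -> Om -> R) (w : Om) : I -> R :=
  fun i => X i w.

(* (X_1,...,X_m,Y_1,...,Y_n) as a point of R^(m+n) *)
Definition join {m n : nat} (a : 'I_m -> R) (b : 'I_n -> R) : 'I_m + 'I_n -> R :=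
  fun s => match s with inl i => a i | inr j => b j end.

(* ---------- sub-linear expectation space (Omega, H, E) ----------
   E is given as a total map on Omega -> R, only its values on H matter. *)
Record is_sublinear_expectation {d} {Om : measurableType d}
    (H : set (Om -> R)) (E : (Om -> R) -> R) : Prop := {
  sle_meas : forall X, H X -> measurable_fun setT X;
  sle_zero : H (fun _ => 0);
  sle_add : forall X Y, H X -> H Y -> H (fun w => X w + Y w);
  sle_scale : forall (c : R) X, H X -> H (fun w => c * X w);
  sle_comp : forall (n : nat) (X : 'I_n -> Om -> R) (phi : ('I_n -> R) -> R),
      (forall i, H (X i)) -> Cb_Lip phi -> H (fun w => phi (tup X w));
  sle_mono : forall X Y, H X -> H Y -> (forall w, X w <= Y w) -> E X <= E Y;
  sle_const : forall c : R, E (fun _ => c) = c;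
  sle_subadd : forall X Y, H X -> H Y -> E (fun w => X w + Y w) <= E X + E Y;
  sle_poshom : forall (l : R) X, 0 <= l -> H X -> E (fun w => l * X w) = l * E X;
  sle_repr : exists Ps : set (probability Om R),
      forall X, H X ->
        (forall P, Ps P -> P.-integrable setT (EFin \o X)) /\
        ((E X)%:E = ereal_sup [set ('E_P[X])%E | P in Ps])
}.

Definition condition_A {Om : Type} (H : set (Om -> R)) (E : (Om -> R) -> R) : Prop :=
  forall X, H X -> forall f : nat -> R -> R,
    (forall k, Cb_Lip1 (f k)) ->
    (forall x k, f k.+1 x <= f k x) ->
    (forall x, (fun k => f k x) @ \oo --> (0 : R)) ->
    (forall k, E (fun w => f k.+1 (X w)) <= E (fun w => f k (X w))) /\
    (fun k => E (fun w => f k (X w))) @ \oo --> (0 : R).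

Definition indep {Om : Type} (E : (Om -> R) -> R) {m n : nat}
    (Y : 'I_n -> Om -> R) (X : 'I_m -> Om -> R) : Prop :=
  forall phi : ('I_m + 'I_n -> R) -> R, Cb_Lip phi ->
    E (fun w => phi (join (tup X w) (tup Y w))) =
    E (fun w => E (fun w' => phi (join (tup X w) (tup Y w')))).

(* {X_i}_{i>=1} independent: X_{n+1} independent of (X_1,...,X_n) *)
Definition indep_seq {Om : Type} (E : (Om -> R) -> R) (X : nat -> Om -> R) : Prop :=
  forall n : nat, indep E (fun _ : 'I_1 => X n.+1) (fun i : 'I_n => X i.+1).

Definition sig_up {Om : Type} (E : (Om -> R) -> R) (X : nat -> Om -> R) (i : nat) : R :=
  Num.sqrt (E (fun w => X i w ^+ 2)).
Definition sig_lo {Om : Type} (E : (Om -> R) -> R) (X : nat -> Om -> R) (i : nat) : R :=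
  Num.sqrt (- E (fun w => - X i w ^+ 2)).
Definition sig {Om : Type} (E : (Om -> R) -> R) (X : nat -> Om -> R) (i : nat) : R :=
  (sig_lo E X i + sig_up E X i) / 2.
Definition Bn {Om : Type} (E : (Om -> R) -> R) (X : nat -> Om -> R) (n : nat) : R :=
  Num.sqrt (\sum_(1 <= i < n.+1) sig E X i ^+ 2).
Definition Sn {Om : Type} (X : nat -> Om -> R) (n : nat) (w : Om) : R :=
  \sum_(1 <= i < n.+1) X i w.
Definition Wn {Om : Type} (E : (Om -> R) -> R) (X : nat -> Om -> R) (n : nat) (w : Om) : R :=
  Sn X n w / Bn E X n.

Definition standing_setting {Om : Type} (H : set (Om -> R)) (E : (Om -> R) -> R)
    (beta : R) (X : nat -> Om -> R) : Prop :=
  indep_seq E X /\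
  (forall i, (1 <= i)%N ->
     H (X i) /\ H (fun w => X i w ^+ 2) /\
     E (X i) = 0 /\ E (fun w => - X i w) = 0 /\
     sig_up E X i / sig_lo E X i = beta) /\
  (exists c C : R, 0 < c /\
     forall i, (1 <= i)%N -> c <= sig_lo E X i ^+ 2 /\ sig_up E X i ^+ 2 <= C).

Definition Gfun {Om : Type} (E : (Om -> R) -> R) (xi : Om -> R) (a : R) : R :=
  1 / 2 * E (fun w => a * xi w ^+ 2).

Definition d_t (phi : R -> R -> R) (t x : R) : R := derive1 (fun s => phi s x) t.
Definition d_x (phi : R -> R -> R) (t x : R) : R := derive1 (fun y => phi t y) x.
Definition d_xx (phi : R -> R -> R) (t x : R) : R := derive1 (fun y => d_x phi t y) x.

Definition test_fun (phi : R -> R -> R) : Prop :=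
  (forall t x, derivable (fun s => phi s x) t 1) /\
  (forall t x, derivable (fun y => phi t y) x 1) /\
  (forall t x, derivable (fun y => d_x phi t y) x 1) /\
  continuous (fun p : R * R => phi p.1 p.2) /\
  continuous (fun p : R * R => d_t phi p.1 p.2) /\
  continuous (fun p : R * R => d_x phi p.1 p.2) /\
  continuous (fun p : R * R => d_xx phi p.1 p.2).

Definition visc_sub (G : R -> R) (u : R -> R -> R) : Prop :=
  forall t x, 0 < t -> forall phi, test_fun phi ->
    (forall s y, 0 < s -> u s y <= phi s y) -> u t x = phi t x ->
    d_t phi t x - G (d_xx phi t x) <= 0.
Definition visc_super (G : R -> R) (u : R -> R -> R) : Prop :=
  forall t x, 0 < t -> forall phi, test_fun phi ->
    (forall s y, 0 < s -> phi s y <= u s y) -> u t x = phi t x ->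
    d_t phi t x - G (d_xx phi t x) >= 0.
Definition visc_solution (G : R -> R) (g : R -> R) (u : R -> R -> R) : Prop :=
  {within [set p : R * R | 0 <= p.1], continuous (fun p : R * R => u p.1 p.2)} /\
  visc_sub G u /\ visc_super G u /\ (forall x, u 0 x = g x).

Definition G_normal {Om : Type} (H : set (Om -> R)) (E : (Om -> R) -> R)
    (xi : Om -> R) : Prop :=
  H xi /\ H (fun w => xi w ^+ 2) /\
  forall g, Cb_Lip1 g ->
    visc_solution (Gfun E xi) g (fun t x => E (fun w => g (x + Num.sqrt t * xi w))).

Definition calH {Om : Type} (E : (Om -> R) -> R) (xi : Om -> R) (g : R -> R) : Prop :=
  Cb_Lip1 g /\ E (fun w => g (xi w)) = - E (fun w => - g (xi w)).

Definition song_alpha {d'} {Om' : measurableType d'} (beta : R)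
    (E' : (Om' -> R) -> R) (xi : Om' -> R) (alpha : R) : Prop :=
  0 < alpha < 1 /\
  exists C : R, 0 < C /\
    forall (d : measure_display) (Om : measurableType d) (H : set (Om -> R))
           (E : (Om -> R) -> R) (X : nat -> Om -> R),
      is_sublinear_expectation H E -> condition_A H E ->
      standing_setting H E beta X ->
      (forall i, (1 <= i)%N -> H (fun w => `|X i w| `^ (2 + alpha))) ->
      forall n, (1 <= n)%N ->
      forall g : R -> R, bounded_fun g -> (forall x y, `|g x - g y| <= `|x - y|) ->
        `| E (fun w => g (Wn E X n w)) - E' (fun w => g (xi w)) | <=
        C * \big[Order.max/0]_(1 <= i < n.+1)
              (E (fun w => `|X i w| `^ (2 + alpha)) / sig E X i `^ (2 + alpha)
               * (sig E X i / Bn E X n) `^ alpha).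

Definition xik {Om : Type} (E : (Om -> R) -> R) (X : nat -> Om -> R) (f : R -> R)
    (k : nat) (w : Om) : R :=
  f (Wn E X k w) - E (fun w' => f (Wn E X k w')).
Definition Zl {Om : Type} (E : (Om -> R) -> R) (X : nat -> Om -> R) (f : R -> R)
    (l : nat) (w : Om) : R :=
  \sum_(4 ^ (l.-1) <= i < 4 ^ l) xik E X f i w / i%:R.

End SubLinear.

From HB Require Import structures.
From mathcomp Require Import all_boot all_order all_algebra.
From mathcomp Require Import all_classical all_reals all_analysis.
From mathcomp Require Import lra.
Import Order.TTheory GRing.Theory Num.Theory.
Local Open Scope ring_scope.

Set Implicit Arguments.
Unset Strict Implicit.

(* Since f is bounded, say by M, each xi_k is bounded by 2M, and as
   sum_{m <= i < 4m} 1/i <= 3, each Z_l is bounded by 6M.  Monotonicity of the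
   sub-linear expectation then gives E[Z_l^2] <= 36 M^2 for every l. *)

Definition clamp (R : realDomainType) (B x : R) : R :=
  if x < - B then - B else if B < x then B else x.

Lemma clamp_bound (R : realDomainType) (B x : R) :
  0 <= B -> - B <= clamp B x <= B.
Proof.
move=> B0; rewrite /clamp; case: ifP => h1; first by rewrite lexx /=; lra.
case: ifP => h2; first by rewrite lexx andbT; lra.
by apply/andP; split; rewrite leNgt ?h1 ?h2.
Qed.

Lemma clamp_id (R : realDomainType) (B x : R) : `|x| <= B -> clamp B x = x.
Proof.
rewrite ler_norml => /andP[h1 h2]; rewrite /clamp.
by case: ifP => h3; [lra | case: ifP => h4 //; lra].
Qed.

Lemma clamp_lipschitz (R : realDomainType) (B x y : R) :
  0 <= B -> `|clamp B x - clamp B y| <= `|x - y|.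
Proof.
move=> B0; have := ler_norm (x - y); have := ler_norm (y - x).
rewrite distrC => n1 n2; rewrite ler_norml; apply/andP; split; rewrite /clamp;
  (case: ifP => h1; case: ifP => h2; try case: ifP => h3; try case: ifP => h4); lra.
Qed.

Lemma Cb_Lip1_sqr_clamp (R : realType) (B : R) :
  0 <= B -> Cb_Lip1 (fun x => clamp B x ^+ 2).
Proof.
move=> B0; split.
  exists (B ^+ 2) => x; have /andP[h1 h2] := clamp_bound x B0.
  rewrite ger0_norm ?sqr_ge0 //; nra.
exists (2 * B) => x y; rewrite subr_sqr normrM mulrC.
have /andP[h1 h2] := clamp_bound x B0; have /andP[h3 h4] := clamp_bound y B0.
apply: ler_pM; rewrite ?normr_ge0 ?clamp_lipschitz //.
by rewrite ler_norml; apply/andP; split; lra.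
Qed.

Lemma ler_norm_sum_div_nat (R : realFieldType) (a : nat -> R) (c : R) (m n : nat) :
  (0 < m)%N -> (forall i, (m <= i < n)%N -> `|a i| <= c) ->
  `|\sum_(m <= i < n) a i / i%:R| <= (n - m)%:R * (c / m%:R).
Proof.
move=> m0 ha; apply: le_trans (ler_norm_sum _ _ _) _.
rewrite mulr_natl -sumr_const_nat; apply: ler_sum_nat => i /andP[mi ni].
rewrite normrM normfV normr_nat; apply: ler_pM; rewrite ?normr_ge0 ?invr_ge0 //.
  by apply: ha; rewrite mi.
by rewrite lef_pV2 ?posrE ?ltr0n ?ler_nat // (leq_trans m0).
Qed.

Section SublinearExpectation.
Variables (R : realType) (d : measure_display) (Om : measurableType d)
  (H : set (Om -> R)) (E : (Om -> R) -> R).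
Hypothesis hE : is_sublinear_expectation H E.

Lemma sle_in_cst (c : R) : H (fun _ => c).
Proof.
apply: (sle_comp hE (X := fun _ : 'I_0 => fun _ => 0) (phi := fun _ => c)).
  by case.
split; first by exists `|c|.
by exists 0 => x y; rewrite subrr normr0 mul0r.
Qed.

Lemma sle_in_comp1 (Y : Om -> R) (g : R -> R) :
  H Y -> Cb_Lip1 g -> H (fun w => g (Y w)).
Proof.
move=> hY [[M hM] [L hL]].
apply: (sle_comp hE (X := fun _ : 'I_1 => Y) (phi := fun x => g (x ord0))) => //.
split; first by exists M.
by exists L => x y; rewrite big_ord1.
Qed.

Lemma sle_in_sum (I : eqType) (s : seq I) (F : I -> Om -> R) :
  (forall i, i \in s -> H (F i)) -> H (fun w => \sum_(i <- s) F i w).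
Proof.
elim: s => [|i s IHs] hF.
  by under eq_fun do rewrite big_nil; exact: sle_in_cst.
under eq_fun do rewrite big_cons; apply: (sle_add hE).
  by apply: hF; rewrite mem_head.
by apply: IHs => j js; apply: hF; rewrite inE js orbT.
Qed.

Lemma sle_in_mulr (c : R) (Y : Om -> R) : H Y -> H (fun w => Y w * c).
Proof.
by move=> hY; under eq_fun do rewrite mulrC; exact: (sle_scale hE).
Qed.

(* x ^+ 2 is not Lipschitz, but on the range of Y it agrees with the bounded
   Lipschitz function clamp B x ^+ 2. *)
Lemma sle_in_sqr (B : R) (Y : Om -> R) :
  0 <= B -> H Y -> (forall w, `|Y w| <= B) -> H (fun w => Y w ^+ 2).
Proof.
move=> B0 hY hYB.
have -> : (fun w => Y w ^+ 2) = (fun w => clamp B (Y w) ^+ 2).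
  by apply: funext => w; rewrite clamp_id.
exact: (sle_in_comp1 hY (Cb_Lip1_sqr_clamp B0)).
Qed.

Lemma sle_le_cst (Y : Om -> R) (c : R) :
  H Y -> (forall w, Y w <= c) -> E Y <= c.
Proof.
move=> hY hYc; rewrite -[leRHS](sle_const hE).
exact: (sle_mono hE hY (sle_in_cst c)).
Qed.

Lemma sle_ge_cst (Y : Om -> R) (c : R) :
  H Y -> (forall w, c <= Y w) -> c <= E Y.
Proof.
move=> hY hcY; rewrite -[leLHS](sle_const hE).
exact: (sle_mono hE (sle_in_cst c) hY).
Qed.

Lemma sle_norm_le (Y : Om -> R) (B : R) :
  H Y -> (forall w, `|Y w| <= B) -> `|E Y| <= B.
Proof.
move=> hY hYB; rewrite ler_norml; apply/andP; split.
  by apply: sle_ge_cst => // w; have := hYB w; rewrite ler_norml => /andP[].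
by apply: sle_le_cst => // w; have := hYB w; rewrite ler_norml => /andP[].
Qed.

Section BlockSums.
Variables (X : nat -> Om -> R) (f : R -> R) (M : R).
Hypothesis hX : forall i, (1 <= i)%N -> H (X i).
Hypothesis hf : Cb_Lip1 f.
Hypothesis hfM : forall x, `|f x| <= M.

Lemma Wn_in (k : nat) : H (Wn E X k).
Proof.
apply: sle_in_mulr; apply: sle_in_sum => i.
by rewrite mem_index_iota => /andP[/hX].
Qed.

Lemma xik_in (k : nat) : H (xik E X f k).
Proof. exact: (sle_add hE (sle_in_comp1 (Wn_in k) hf) (sle_in_cst _)). Qed.

Lemma norm_xik_le (k : nat) (w : Om) : `|xik E X f k w| <= M + M.
Proof.
apply: le_trans (ler_normB _ _) _; apply: lerD => //.
exact: (sle_norm_le (sle_in_comp1 (Wn_in k) hf)).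
Qed.

Lemma Zl_in (l : nat) : H (Zl E X f l).
Proof. by apply: sle_in_sum => i _; apply/sle_in_mulr/xik_in. Qed.

Lemma M_ge0 : 0 <= M.
Proof. exact: le_trans (normr_ge0 _) (hfM 0). Qed.

Lemma norm_Zl_le (l : nat) (w : Om) : `|Zl E X f l w| <= 6 * M.
Proof.
have m0 : (0 < 4 ^ l.-1)%N by rewrite expn_gt0.
apply: le_trans (ler_norm_sum_div_nat (c := M + M) m0 _) _.
  by move=> i _; exact: norm_xik_le.
have M0 := M_ge0.
case: l m0 => [|l] m0 /=.
  by rewrite subnn mul0r; lra.
have mR : (4 ^ l)%:R != 0 :> R by rewrite pnatr_eq0 -lt0n.
rewrite expnS -[X in (_ - X)%N]mul1n -mulnBl natrM -mulrA [X in _ * X]mulrC.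
by rewrite divfK // (_ : (4 - 1)%N = 3) //; lra.
Qed.

Lemma E_Zl_sqr_le (l : nat) : E (fun w => Zl E X f l w ^+ 2) <= (6 * M) ^+ 2.
Proof.
have M0 := M_ge0.
apply: sle_le_cst => [|w].
  by apply: (sle_in_sqr (B := 6 * M)); [lra | exact: Zl_in | exact: norm_Zl_le].
by rewrite -real_normK ?num_real // lerXn2r ?nnegrE ?norm_Zl_le //; lra.
Qed.

End BlockSums.
End SublinearExpectation.

Theorem lemma4p4 (R : realType) (beta : R)
    (d : measure_display) (Om : measurableType d)
    (H : set (Om -> R)) (E : (Om -> R) -> R)
    (d' : measure_display) (Om' : measurableType d')
    (H' : set (Om' -> R)) (E' : (Om' -> R) -> R) (xi : Om' -> R)
    (alpha : R) (X : nat -> Om -> R) (f : R -> R) :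
  1 <= beta ->
  is_sublinear_expectation H E -> condition_A H E ->
  is_sublinear_expectation H' E' -> condition_A H' E' ->
  G_normal H' E' xi ->
  Num.sqrt (E' (fun w => xi w ^+ 2)) = 2 * beta / (1 + beta) ->
  Num.sqrt (- E' (fun w => - xi w ^+ 2)) = 2 / (1 + beta) ->
  song_alpha beta E' xi alpha ->
  standing_setting H E beta X ->
  (forall i, (1 <= i)%N -> H (fun w => `|X i w| `^ (2 + alpha))) ->
  (exists K : R, forall i, (1 <= i)%N -> E (fun w => `|X i w| `^ (2 + alpha)) <= K) ->
  calH E' xi f ->
  exists M5 : R, 0 < M5 /\
    forall n1 n2 : nat, (1 <= n1 <= n2)%N ->
      \sum_(n1 <= l < n2.+1) E (fun w => Zl E X f l w ^+ 2)
        <= M5 * (n2 - n1 + 1)%:R.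
Proof.
move=> _ hE _ _ _ _ _ _ _ [_ [hX _]] _ _ [hf _].
have hX1 i : (1 <= i)%N -> H (X i) by move=> /hX[].
have [[M hfM] _] := hf.
exists ((6 * M) ^+ 2 + 1); split; first by rewrite ltr_wpDl ?sqr_ge0.
move=> n1 n2 /andP[_ n12].
apply: le_trans (_ : \sum_(n1 <= l < n2.+1) ((6 * M) ^+ 2 + 1) <= _).
  apply: ler_sum_nat => l _; apply: le_trans (E_Zl_sqr_le hE hX1 hf hfM l) _.
  by rewrite lerDl.
by rewrite sumr_const_nat subSn // addn1 mulr_natr.
Qed.
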